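(* The Heisenberg group $\mathrm{UT}_3(\mathbb{Z})$ of upper unitriangular $3\times 3$ integer matrices is not strongly verbally closed.
   Context: A subgroup $H$ of a group $G$ is verbally closed in $G$ if every equation $w(x_1,\dots,x_n)=h$, where $w$ is an element of the free group $F(x_1,\dots,x_n)$ and $h\in H$, that has a solution in $G$ has a solution in $H$. $H$ is algebraically closed in $G$ if every finite system of equations $\{w_1=1,\dots,w_m=1\}$ with $w_i\in H*F(x_1,\dots,x_n)$ that has a solution in $G$ has a solution in $H$. A group $H$ is strongly verbally closed if it is algebraically closed in every group containing $H$ as a verbally closed subgroup. *)

From Stdlib Require Import List.
From mathcomp Require Import all_boot all_order all_algebra.
Set Implicit Arguments. Unset Strict Implicit. Unset Printing Implicit Defensive.
Import Order.TTheory GRing.Theory Num.Theory.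
Local Open Scope ring_scope.

Record group := Group {
  gcar :> Type;
  gmul : gcar -> gcar -> gcar;
  gone : gcar;
  ginv : gcar -> gcar;
  gmulA : forall x y z, gmul x (gmul y z) = gmul (gmul x y) z;
  gmul1 : forall x, gmul gone x = x;
  gmulV : forall x, gmul (ginv x) x = gone
}.

Definition unitriangular n (A : 'M[int]_n) : bool :=
  [forall i : 'I_n, forall j : 'I_n, ((j < i)%N ==> (A i j == 0)) && ((i == j) ==> (A i j == 1))].

Lemma unitriangularP n (A : 'M[int]_n) :
  reflect ((forall i j : 'I_n, (j < i)%N -> A i j = 0) /\ (forall i, A i i = 1))
          (unitriangular A).
Proof.
apply: (iffP forallP) => [H|[H1 H2] i].
  split=> [i j lt|i].
    by have /forallP/(_ j)/andP[/implyP/(_ lt)/eqP] := H i.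
  by have /forallP/(_ i)/andP[_ /implyP/(_ (eqxx i))/eqP] := H i.
apply/forallP=> j; apply/andP; split; apply/implyP => h.
  by rewrite H1.
by move/eqP: h => <-; rewrite H2.
Qed.

Lemma unitriangularM n (A B : 'M[int]_n) :
  unitriangular A -> unitriangular B -> unitriangular (A *m B).
Proof.
move=> /unitriangularP[A0 A1] /unitriangularP[B0 B1]; apply/unitriangularP.
split=> [i j lt|i]; rewrite mxE.
  apply: big1 => k _; case: (ltnP k i) => hk; first by rewrite A0 ?mul0r.
  by rewrite B0 ?mulr0 //; apply: leq_trans lt hk.
rewrite (bigD1 i) //= A1 B1 mul1r big1 ?addr0 // => k /negbTE nk.
case: (ltngtP k i) => hk; first by rewrite A0 ?mul0r.
  by rewrite B0 ?mulr0.
by move/val_inj: hk nk => ->; rewrite eqxx.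
Qed.

Definition UT3 := {A : 'M[int]_3 | unitriangular A}.

Definition UT3_mul (x y : UT3) : UT3 :=
  exist _ (sval x *m sval y) (unitriangularM (svalP x) (svalP y)).

(** An element of the free group F(x_1, ..., x_n) is represented by a word,
    i.e. a list of letters (j, b) standing for x_j (b = false) or x_j^{-1}
    (b = true).  An element of H * F(x_1,...,x_n) is a word whose letters are
    either constants h in H or such variable letters. Evaluation does not
    depend on the chosen word representing the free-product element. *)
Definition letter := (nat * bool)%type.

Section Eval.
Variable G : group.

Definition eval_letter (s : nat -> G) (l : letter) : G :=
  if l.2 then ginv (s l.1) else s l.1.

Definition eval_word (s : nat -> G) (w : seq letter) : G :=
  foldr (fun l acc => gmul (eval_letter s l) acc) (gone G) w.

Definition eval_cword (H : Type) (f : H -> G) (s : nat -> G)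
  (w : seq (H + letter)) : G :=
  foldr (fun l acc => gmul (match l with
                            | inl h => f h
                            | inr a => eval_letter s a end) acc) (gone G) w.
End Eval.

(** H is embedded in G via the injective homomorphism f; "solution in H"
    means a solution in G all of whose values lie in f(H). *)
Definition is_embedding (H : Type) (mulH : H -> H -> H) (G : group) (f : H -> G) :=
  injective f /\ forall x y, f (mulH x y) = gmul (f x) (f y).

Definition verbally_closed (H : Type) (G : group) (f : H -> G) : Prop :=
  forall (w : seq letter) (h : H),
    (exists s : nat -> G, eval_word s w = f h) ->
    exists t : nat -> H, eval_word (fun i => f (t i)) w = f h.

Definition algebraically_closed (H : Type) (G : group) (f : H -> G) : Prop :=
  forall (S : seq (seq (H + letter))),
    (exists s : nat -> G, forall w, List.In w S -> eval_cword f s w = gone G) ->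
    exists t : nat -> H, forall w, List.In w S ->
      eval_cword f (fun i => f (t i)) w = gone G.

Definition strongly_verbally_closed (H : Type) (mulH : H -> H -> H) : Prop :=
  forall (G : group) (f : H -> G), is_embedding mulH f ->
    verbally_closed f -> algebraically_closed f.

(* UT_3(Z) is the Heisenberg group of integer triples (x, y, c) with
   (x, y, c) (x', y', c') = (x + x', y + y', c + c' + x y'); embed it diagonally into
   G = prod_(N >= 2) UT_3(Z/NZ).

   A word w(x_1, ..., x_n) evaluates to
   (sum e_i x_i, sum e_i y_i, sum e_i c_i + sum m_ij x_i y_j), e_i the exponent sum of x_i.
   If w = h is solvable in G, it is solvable modulo every N, and this lifts to Z: when
   d = gcd(e_i) != 0, a solution modulo 2 d^2 is corrected by multiples of d; when all e_i
   vanish, the bilinear part takes exactly the values in g Z, g the gcd of the m_ij (Smith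
   normal form). So UT_3(Z) is verbally closed in G.

   It is not algebraically closed in G: with a = (1, 0, 0), b = (0, 1, 0), z = (0, 0, 1),
   the system [x, a] = [y, b] = [x, y] = 1, [x, b]^3 [y, a]^2 z = 1 says x = (p, 0, _),
   y = (0, q, _) with p q = 0 and 3 p - 2 q + 1 = 0. There is no integer solution, but
   modulo N = m 2^k with m odd one may take p = 0 mod m and q = 0 mod 2^k. *)

From Pilot Require Import Defs.
From Stdlib Require Import FunctionalExtensionality.
From mathcomp Require Import all_boot all_order all_algebra.
From mathcomp Require Import ring zify.
Set Implicit Arguments. Unset Strict Implicit. Unset Printing Implicit Defensive.
Import Order.TTheory GRing.Theory Num.Theory.
Local Open Scope ring_scope.

Definition group_morphism (G1 G2 : group) (phi : G1 -> G2) :=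
  [/\ forall x y, phi (gmul x y) = gmul (phi x) (phi y),
      forall x, phi (ginv x) = ginv (phi x) & phi (gone G1) = gone G2].

Section WordMorphism.
Variables (G1 G2 : group) (phi : G1 -> G2).
Hypothesis phiM : group_morphism phi.

Lemma eval_word_morph s w : phi (eval_word s w) = eval_word (phi \o s) w.
Proof.
case: phiM => mulM invM oneM.
by elim: w => [|[j b] w IHw] //=; rewrite mulM IHw /eval_letter; case: b => //=; rewrite invM.
Qed.

Lemma eval_cword_morph (H : Type) (f : H -> G1) s w :
  phi (eval_cword f s w) = eval_cword (phi \o f) (phi \o s) w.
Proof.
case: phiM => mulM invM oneM.
by elim: w => [|[h|[j [|]]] w IHw] //=; rewrite mulM IHw // /eval_letter /= invM.
Qed.
End WordMorphism.

Lemma eval_cword_cat (G : group) (H : Type) (f : H -> G) s w1 w2 :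
  eval_cword f s (w1 ++ w2) = gmul (eval_cword f s w1) (eval_cword f s w2).
Proof. by elim: w1 => [|l w1 IHw] /=; rewrite ?gmul1 // IHw gmulA. Qed.

Section ProductGroup.
Variable F : nat -> group.

Definition prod_mul (a b : forall k, F k) : forall k, F k := fun k => gmul (a k) (b k).
Definition prod_inv (a : forall k, F k) : forall k, F k := fun k => ginv (a k).

Lemma prod_mulA : forall x y z, prod_mul x (prod_mul y z) = prod_mul (prod_mul x y) z.
Proof. by move=> x y z; apply: functional_extensionality_dep => k; apply: gmulA. Qed.

Lemma prod_mul1 : forall x, prod_mul (fun k => gone (F k)) x = x.
Proof. by move=> x; apply: functional_extensionality_dep => k; apply: gmul1. Qed.

Lemma prod_mulV : forall x, prod_mul (prod_inv x) x = fun k => gone (F k).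
Proof. by move=> x; apply: functional_extensionality_dep => k; apply: gmulV. Qed.

Definition prod_group : group := @Defs.Group _ _ _ _ prod_mulA prod_mul1 prod_mulV.

Lemma proj_morph k : group_morphism (fun x : prod_group => x k).
Proof. by []. Qed.

Lemma tuple_morph (G : group) (phi : forall k, G -> F k) :
  (forall k, group_morphism (phi k)) ->
  group_morphism (fun x : G => (fun k => phi k x) : prod_group).
Proof.
move=> phiM; split=> [x y|x|]; apply: functional_extensionality_dep => k;
  by case: (phiM k).
Qed.
End ProductGroup.

Section HeisenbergGroup.
Variable R : comPzRingType.

Definition heis_mul (a b : R * R * R) : R * R * R :=
  (a.1.1 + b.1.1, a.1.2 + b.1.2, a.2 + b.2 + a.1.1 * b.1.2).
Definition heis_inv (a : R * R * R) : R * R * R :=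
  (- a.1.1, - a.1.2, - a.2 + a.1.1 * a.1.2).

Lemma heis_mulA : forall x y z, heis_mul x (heis_mul y z) = heis_mul (heis_mul x y) z.
Proof. by move=> x y z; rewrite /heis_mul /=; congr (_, _, _); ring. Qed.

Lemma heis_mul1 : forall x, heis_mul (0, 0, 0) x = x.
Proof. by move=> [[x y] c]; rewrite /heis_mul /=; congr (_, _, _); ring. Qed.

Lemma heis_mulV : forall x, heis_mul (heis_inv x) x = (0, 0, 0).
Proof. by move=> x; rewrite /heis_mul /=; congr (_, _, _); ring. Qed.

Definition heis : group := @Defs.Group _ _ _ _ heis_mulA heis_mul1 heis_mulV.

Lemma heis_commE (g h : heis) :
  gmul g (gmul h (gmul (ginv g) (gmul (ginv h) (gone heis)))) =
  (0, 0, g.1.1 * h.1.2 - h.1.1 * g.1.2).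
Proof. by rewrite /= /heis_mul /=; congr (_, _, _); ring. Qed.
End HeisenbergGroup.

Definition heis_map (R S : comPzRingType) (f : {rmorphism R -> S}) (t : heis R) : heis S :=
  (f t.1.1, f t.1.2, f t.2).

Lemma heis_map_morph (R S : comPzRingType) (f : {rmorphism R -> S}) :
  group_morphism (heis_map f).
Proof.
by split=> [x y|x|]; rewrite /heis_map /= ?rmorphD ?rmorphM ?rmorphN ?rmorph0.
Qed.

(** * Reduction modulo all N >= 2 *)

Definition heis_mod := prod_group (fun k => heis 'Z_(k.+2)).

Definition diag_mod (t : heis int) : heis_mod := fun k => heis_map intr t.

Lemma diag_mod_morph : group_morphism diag_mod.
Proof. by apply: tuple_morph => k; apply: heis_map_morph. Qed.

Lemma intr_Zp_eq k (a b : int) : ((a%:~R : 'Z_(k.+2)) == b%:~R) = ((k.+2)%:Z %| a - b)%Z.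
Proof.
rewrite -subr_eq0 -mulrzBr dvdzE; case: (a - b) => n.
  by rewrite -pmulrn -val_eqE /= val_Zp_nat.
by rewrite NegzE mulrNz oppr_eq0 -pmulrn -val_eqE /= val_Zp_nat.
Qed.

Lemma dvdz_all_eq0 (z : int) : (forall N, (1 < N)%N -> (N%:Z %| z)%Z) -> z = 0.
Proof.
move=> dvd_z; apply/eqP; rewrite -absz_eq0; apply/eqP.
by have /dvdn_leq := dvd_z `|z|.+2 isT; case: `|z|%N => // m; lia.
Qed.

Lemma intr_Zp_inj (a b : int) : (forall k, (a%:~R : 'Z_(k.+2)) = b%:~R) -> a = b.
Proof.
move=> eq_ab; apply/eqP; rewrite -subr_eq0; apply/eqP/dvdz_all_eq0 => -[|[|k]] // _.
by rewrite -intr_Zp_eq eq_ab.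
Qed.

Lemma diag_mod_inj : injective diag_mod.
Proof.
move=> s t eq_st; have eq_k k := f_equal (fun g : heis_mod => g k) eq_st.
by case: s t eq_st eq_k => [[? ?] ?] [[? ?] ?] _ eq_k; congr (_, _, _);
  apply: intr_Zp_inj => k; case: (eq_k k).
Qed.

Definition eqmod_heis (N : int) (s t : int * int * int) :=
  [/\ (N %| s.1.1 - t.1.1)%Z, (N %| s.1.2 - t.1.2)%Z & (N %| s.2 - t.2)%Z].

Lemma heis_map_Zp_eq k (s t : heis int) :
  heis_map (intr : int -> 'Z_(k.+2)) s = heis_map intr t <-> eqmod_heis k.+2 s t.
Proof.
rewrite /heis_map /eqmod_heis /=; split=> [[e1 e2 e3]|[e1 e2 e3]].
  by split; rewrite -intr_Zp_eq; apply/eqP.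
by congr (_, _, _); apply/eqP; rewrite intr_Zp_eq.
Qed.

Definition Zp_lift k (x : 'Z_(k.+2)) : int := (x : nat)%:Z.

Lemma Zp_liftK k : cancel (@Zp_lift k) intr.
Proof. by move=> x; rewrite /Zp_lift -pmulrn natr_Zp. Qed.

Definition heis_lift k (t : heis 'Z_(k.+2)) : heis int :=
  (Zp_lift t.1.1, Zp_lift t.1.2, Zp_lift t.2).

Lemma heis_liftK k : cancel (@heis_lift k) (heis_map intr).
Proof. by move=> [[x y] c]; rewrite /heis_map /= !Zp_liftK. Qed.

Definition i0 : 'I_3 := @Ordinal 3 0 isT.
Definition i1 : 'I_3 := @Ordinal 3 1 isT.
Definition i2 : 'I_3 := @Ordinal 3 2 isT.

Lemma ord3P (i : 'I_3) : [\/ i = i0, i = i1 | i = i2].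
Proof.
by case: i => [[|[|[|//]]] ?]; [apply: Or31 | apply: Or32 | apply: Or33]; apply: val_inj.
Qed.

Lemma unitriangular3E (A : 'M[int]_3) : unitriangular A ->
  [/\ A i0 i0 = 1, A i1 i1 = 1, A i2 i2 = 1 & [/\ A i1 i0 = 0, A i2 i0 = 0 & A i2 i1 = 0]].
Proof. by move/unitriangularP=> [A0 A1]; rewrite !A1 !A0. Qed.

Definition heis_of_UT3 (A : UT3) : heis int := (sval A i0 i1, sval A i1 i2, sval A i0 i2).

Definition UT3_matrix (t : heis int) : 'M[int]_3 :=
  \matrix_(i, j) (nth [::] [:: [:: 1; t.1.1; t.2]; [:: 0; 1; t.1.2]; [:: 0; 0; 1]] i)`_j.

Lemma UT3_matrix_unitriangular t : unitriangular (UT3_matrix t).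
Proof.
apply/unitriangularP; split=> [i j|i]; rewrite mxE.
  by case: (ord3P i) => ->; case: (ord3P j) => ->.
by case: (ord3P i) => ->.
Qed.

Definition UT3_of_heis (t : heis int) : UT3 :=
  exist _ (UT3_matrix t) (UT3_matrix_unitriangular t).

Lemma UT3_of_heisK : cancel UT3_of_heis heis_of_UT3.
Proof. by move=> [[x y] c]; rewrite /heis_of_UT3 /= !mxE. Qed.

Lemma heis_of_UT3K : cancel heis_of_UT3 UT3_of_heis.
Proof.
move=> [A A_ut]; apply: val_inj; apply/matrixP => i j; rewrite mxE /=.
have [a00 a11 a22 [a10 a20 a21]] := unitriangular3E A_ut.
by case: (ord3P i) => ->; case: (ord3P j) => ->.
Qed.

Lemma heis_of_UT3M A B :
  heis_of_UT3 (UT3_mul A B) = gmul (heis_of_UT3 A) (heis_of_UT3 B).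
Proof.
case: A B => [A A_ut] [B B_ut].
have [a00 a11 a22 [a10 a20 a21]] := unitriangular3E A_ut.
have [b00 b11 b22 [b10 b20 b21]] := unitriangular3E B_ut.
rewrite /heis_of_UT3 /= !mxE !big_ord_recl !big_ord0.
have -> : lift ord0 (lift ord0 ord0) = i2 :> 'I_3 by apply: val_inj.
have -> : lift ord0 ord0 = i1 :> 'I_3 by apply: val_inj.
have -> : ord0 = i0 :> 'I_3 by apply: val_inj.
rewrite ?a00 ?a11 ?a22 ?a10 ?a20 ?a21 ?b00 ?b11 ?b22 ?b10 ?b20 ?b21 /heis_mul /=.
by congr (_, _, _); ring.
Qed.

Definition embed (A : UT3) : heis_mod := diag_mod (heis_of_UT3 A).

Lemma embed_is_embedding : is_embedding UT3_mul embed.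
Proof.
split=> [A B /diag_mod_inj eqAB|A B]; first exact: can_inj heis_of_UT3K _ _ eqAB.
by rewrite /embed heis_of_UT3M; case: diag_mod_morph.
Qed.

(** * Word maps on the Heisenberg group over Z *)

Section HeisPoly.
Variable n : nat.

Definition lin_form (E X : nat -> int) : int := \sum_(i < n) E i * X i.

Definition bilin_form (M : nat -> nat -> int) (X Y : nat -> int) : int :=
  \sum_(i < n) \sum_(j < n) M i j * (X i * Y j).

Definition heis_poly E M (X Y C : nat -> int) : int * int * int :=
  (lin_form E X, lin_form E Y, lin_form E C + bilin_form M X Y).

Lemma lin_form_delta k (X : nat -> int) : (k < n)%N ->
  lin_form (fun i => (k == i)%:R) X = X k.
Proof.
move=> lt_kn; rewrite /lin_form (bigD1 (Ordinal lt_kn)) //= eqxx mul1r.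
rewrite big1 ?addr0 // => i; rewrite -val_eqE /= eq_sym => /negbTE->.
by rewrite mul0r.
Qed.

Lemma lin_formDl E E' X : lin_form (fun i => E i + E' i) X = lin_form E X + lin_form E' X.
Proof. by rewrite -big_split; apply: eq_bigr => i _; rewrite mulrDl. Qed.

Lemma lin_formZl c E X : lin_form (fun i => c * E i) X = c * lin_form E X.
Proof. by rewrite mulr_sumr; apply: eq_bigr => i _; rewrite mulrA. Qed.

Lemma lin_formDr E X X' : lin_form E (fun i => X i + X' i) = lin_form E X + lin_form E X'.
Proof. by rewrite -big_split; apply: eq_bigr => i _; rewrite mulrDr. Qed.

Lemma lin_formZr c E X : lin_form E (fun i => c * X i) = c * lin_form E X.
Proof. by rewrite mulr_sumr; apply: eq_bigr => i _; rewrite mulrCA. Qed.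

Lemma bilin_form_delta k N M X Y : (k < n)%N ->
  bilin_form (fun i j => (k == i)%:R * N j + M i j) X Y =
  X k * lin_form N Y + bilin_form M X Y.
Proof.
move=> lt_kn; rewrite -(lin_form_delta (fun i => X i * lin_form N Y) lt_kn).
rewrite /bilin_form /lin_form -big_split; apply: eq_bigr => i _.
under eq_bigr do rewrite mulrDl.
by rewrite big_split /= !mulr_sumr; congr (_ + _); apply: eq_bigr => j _; ring.
Qed.

Lemma dvdz_lin_form d E X :
  (forall i, (i < n)%N -> (d %| E i)%Z) -> (d %| lin_form E X)%Z.
Proof. by move=> dvd_dE; apply: rpred_sum => i _; apply/dvdz_mulr/dvd_dE. Qed.

Lemma dvdz_bilin_form g M X Y :
  (forall i j, (i < n)%N -> (j < n)%N -> (g %| M i j)%Z) -> (g %| bilin_form M X Y)%Z.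
Proof.
by move=> dvd_gM; apply: rpred_sum => i _; apply: rpred_sum => j _; apply/dvdz_mulr/dvd_gM.
Qed.

Lemma bilin_form_congr d M X X' Y Y' :
  (forall i, (d %| X' i - X i)%Z) -> (forall j, (d %| Y' j - Y j)%Z) ->
  (d %| bilin_form M X' Y' - bilin_form M X Y)%Z.
Proof.
move=> dX dY; rewrite -sumrB; apply: rpred_sum => i _; rewrite -sumrB.
apply: rpred_sum => j _; rewrite -mulrBr; apply: dvdz_mull.
have -> : X' i * Y' j - X i * Y j = X' i * (Y' j - Y j) + (X' i - X i) * Y j by ring.
by rewrite rpredD //; [apply: dvdz_mull | apply: dvdz_mulr].
Qed.

Lemma heis_eval_word_bounded w : all (fun l : letter => l.1 < n)%N w ->
  exists E M, forall T : nat -> heis int, eval_word T w =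
    heis_poly E M (fun i => (T i).1.1) (fun i => (T i).1.2) (fun i => (T i).2).
Proof.
elim: w => [_|[k b] w IHw /= /andP[lt_kn /IHw[E [M evalT]]]].
  exists (fun=> 0), (fun _ _ => 0) => T.
  rewrite /heis_poly /lin_form /bilin_form !big1 ?addr0 // => i _;
    by rewrite ?mul0r // big1 // => j _; rewrite mul0r.
pose N j := if b then (k == j)%:R - E j else E j.
exists (fun i => (-1) ^+ b * (k == i)%:R + E i), (fun i j => (k == i)%:R * N j + M i j).
move=> T; rewrite evalT /heis_poly bilin_form_delta // !lin_formDl !lin_formZl.
rewrite !lin_form_delta //; set Y := fun i => (T i).1.2.
have -> : lin_form N Y = if b then Y k - lin_form E Y else lin_form E Y.
  rewrite /N; clear N evalT; case: b => //.
  rewrite -(lin_form_delta Y lt_kn) -mulN1r -lin_formZl -lin_formDl.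
  by apply: eq_bigr => i _; ring.
clear N; rewrite /eval_letter /Y /=; case: b => /=; rewrite /heis_mul /heis_inv /=;
  by congr (_, _, _); ring.
Qed.
End HeisPoly.

Lemma heis_eval_word w : exists n E M, forall T : nat -> heis int, eval_word T w =
  heis_poly n E M (fun i => (T i).1.1) (fun i => (T i).1.2) (fun i => (T i).2).
Proof.
exists (\max_(l <- w) l.1.+1)%N; apply: heis_eval_word_bounded.
by apply/allP => l l_w; apply: (@leq_bigmax_seq _ _ xpredT (fun l : letter => l.1.+1)).
Qed.

(** * Solutions modulo every N lift to Z *)

Lemma bilinear_gcd m n (M : nat -> nat -> int) : exists g (a b : nat -> int),
  (forall i j, (i < m)%N -> (j < n)%N -> (g %| M i j)%Z) /\
  \sum_(i < m) \sum_(j < n) M i j * (a i * b j) = g.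
Proof.
case: m => [|m]; last case: n => [|n].
- by exists 0, (fun=> 0), (fun=> 0); rewrite big_ord0.
- by exists 0, (fun=> 0), (fun=> 0); split=> //; rewrite big1 // => i _; rewrite big_ord0.
pose A : 'M[int]_(m.+1, n.+1) := \matrix_(i, j) M i j.
have [L uL [R uR [d sorted_d eqA]]] := int_Smith_normal_form A.
have d0_dvd l : (d`_0 %| d`_l)%Z.
  case: (ltnP l (size d)) => [lt_ld|]; last by move/(nth_default 0)->.
  by apply: (sorted_leq_nth dvdz_trans dvdzz 0 sorted_d); rewrite // inE (leq_ltn_trans _ lt_ld).
exists d`_0, (fun i => invmx L ord0 (inord i)), (fun j => invmx R (inord j) ord0); split.
  move=> i j lt_im lt_jn.
  have -> : M i j = A (inord i) (inord j) by rewrite mxE !inordK.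
  rewrite eqA !mxE; apply: rpred_sum => k _; apply: dvdz_mulr.
  rewrite !mxE; apply: rpred_sum => l _; apply: dvdz_mull.
  by rewrite !mxE; case: (l == k :> nat); rewrite ?mulr0n ?mulr1n.
have : (invmx L *m A *m invmx R) ord0 ord0 = d`_0.
  by rewrite eqA !mulmxA mulmxK // -!mulmxA mulKmx // mxE eqxx mulr1n.
rewrite mxE => <-; rewrite exchange_big /=; apply: eq_bigr => i _.
by rewrite mxE mulr_suml; apply: eq_bigr => j _; rewrite !mxE !inord_val; ring.
Qed.

Lemma lin_form_gcd n E : exists d u,
  (forall i, (i < n)%N -> (d %| E i)%Z) /\ lin_form n E u = d.
Proof.
have [d [a [b [dvd_dE sum_d]]]] := bilinear_gcd 1 n (fun=> E).
exists d, (fun j => a 0%N * b j); split=> [i|]; first exact: (dvd_dE 0%N).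
by rewrite -sum_d big_ord1.
Qed.

Lemma dvdz_of_congr (g z : int) :
  (forall N, (1 < N)%N -> exists2 q, (g %| q)%Z & (N%:Z %| q - z)%Z) -> (g %| z)%Z.
Proof.
move=> congr_z; have [g0|g_neq0] := eqVneq g 0.
  suff -> : z = 0 by apply: dvdz0.
  apply: dvdz_all_eq0 => N /congr_z[q]; rewrite g0 dvd0z => /eqP->.
  by rewrite sub0r rpredN.
have /congr_z[q dvd_gq] : (1 < 2 * `|g|)%N by move: g_neq0; rewrite -absz_gt0; lia.
have dvd_gN : (g %| (2 * `|g|)%N%:Z)%Z by rewrite dvdzE /= dvdn_mull.
by move=> /(dvdz_trans dvd_gN) dvd_g; rewrite -(subKr q z) rpredB.
Qed.

Section HeisPolyLocalGlobal.
Variables (n : nat) (E : nat -> int) (M : nat -> nat -> int) (h : int * int * int).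
Hypothesis heis_poly_local : forall N, (1 < N)%N ->
  exists X Y C, eqmod_heis N%:Z (heis_poly n E M X Y C) h.

Lemma heis_poly_global_degenerate :
  (forall i, (i < n)%N -> E i = 0) -> exists X Y C, heis_poly n E M X Y C = h.
Proof.
move=> E0; have lin0 X : lin_form n E X = 0 by apply: big1 => i _; rewrite E0 ?mul0r.
have h_xy : h.1.1 = 0 /\ h.1.2 = 0.
  split; apply: dvdz_all_eq0 => N /heis_poly_local[X [Y [C [/= dX dY _]]]].
    by rewrite -rpredN -sub0r -(lin0 X).
  by rewrite -rpredN -sub0r -(lin0 Y).
have [g [a [b [dvd_gM bilin_ab]]]] := bilinear_gcd n n M.
have /dvdzP[q hq] : (g %| h.2)%Z.
  apply: dvdz_of_congr => N /heis_poly_local[X [Y [C [_ _]]]].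
  by rewrite /= lin0 add0r; exists (bilin_form n M X Y); first exact: dvdz_bilin_form.
exists a, (fun j => q * b j), (fun=> 0); rewrite /heis_poly !lin0 add0r.
case: h hq h_xy => [[hx hy] hc] /= -> [-> ->]; congr (_, _, _); rewrite -bilin_ab mulr_sumr.
by apply: eq_bigr => i _; rewrite mulr_sumr; apply: eq_bigr => j _; ring.
Qed.

Lemma heis_poly_global_primitive d u :
  d != 0 -> (forall i, (i < n)%N -> (d %| E i)%Z) -> lin_form n E u = d ->
  exists X Y C, heis_poly n E M X Y C = h.
Proof.
move=> d_neq0 dvd_dE lin_u.
(* 2 d^2 rather than d^2, so that the modulus exceeds 1 also when d = 1 or d = -1 *)
have /heis_poly_local[X [Y [C [/= dX dY dC]]]] : (1 < 2 * `|d| ^ 2)%N.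
  by move: d_neq0; rewrite -absz_gt0; nia.
have dvd_d2 : (d ^+ 2 %| (2 * `|d| ^ 2)%N%:Z)%Z by rewrite dvdzE abszX dvdn_mull.
have /dvdzP[kX hkX] : (d ^+ 2 %| h.1.1 - lin_form n E X)%Z.
  by rewrite -opprB rpredN (dvdz_trans dvd_d2).
have /dvdzP[kY hkY] : (d ^+ 2 %| h.1.2 - lin_form n E Y)%Z.
  by rewrite -opprB rpredN (dvdz_trans dvd_d2).
pose X' i := X i + d * kX * u i; pose Y' i := Y i + d * kY * u i.
have /dvdzP[kC hkC] : (d %| h.2 - bilin_form n M X' Y')%Z.
  have -> : h.2 - bilin_form n M X' Y' =
      lin_form n E C - (lin_form n E C + bilin_form n M X Y - h.2)
      - (bilin_form n M X' Y' - bilin_form n M X Y) by ring.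
  apply: rpredB; first apply: rpredB.
  - exact: dvdz_lin_form.
  - by apply: dvdz_trans (dvdz_trans dvd_d2 dC); apply: dvdz_exp.
  - by apply: bilin_form_congr => i; rewrite addrC addKr -mulrA dvdz_mulr.
have lin_shift (Z : nat -> int) k :
    lin_form n E (fun i => Z i + d * k * u i) = lin_form n E Z + k * d ^+ 2.
  by rewrite lin_formDr lin_formZr lin_u; ring.
exists X', Y', (fun i => kC * u i); rewrite /heis_poly lin_formZr lin_u !lin_shift.
by rewrite -hkX -hkY -hkC; case: h => [[? ?] ?] /=; congr (_, _, _); ring.
Qed.

Lemma heis_poly_local_global : exists X Y C, heis_poly n E M X Y C = h.
Proof.
have [d [u [dvd_dE lin_u]]] := lin_form_gcd n E.
have [d0|d_neq0] := eqVneq d 0; last exact: heis_poly_global_primitive d_neq0 dvd_dE lin_u.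
by apply: heis_poly_global_degenerate => i /dvd_dE; rewrite d0 dvd0z => /eqP.
Qed.
End HeisPolyLocalGlobal.

Lemma embed_verbally_closed : verbally_closed embed.
Proof.
move=> w A [s eval_s]; have [n [E [M evalE]]] := heis_eval_word w.
have [|X [Y [C eval_XYC]]] := @heis_poly_local_global n E M (heis_of_UT3 A).
  move=> N N_gt1; have [k ->] : exists k, N = k.+2 by exists N.-2; lia.
  pose T i := heis_lift (s i k).
  exists (fun i => (T i).1.1), (fun i => (T i).1.2), (fun i => (T i).2).
  apply/heis_map_Zp_eq; rewrite -evalE (eval_word_morph (heis_map_morph _)).
  have -> : heis_map intr \o T = fun i => s i k.
    by apply: functional_extensionality => i; apply: heis_liftK.
  by have := f_equal (fun g : heis_mod => g k) eval_s; rewrite (eval_word_morph (proj_morph _ k)).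
exists (fun i => UT3_of_heis (X i, Y i, C i)).
have -> : (fun i => embed (UT3_of_heis (X i, Y i, C i))) = diag_mod \o (fun i => (X i, Y i, C i)).
  by apply: functional_extensionality => i; rewrite /embed UT3_of_heisK.
by rewrite -(eval_word_morph diag_mod_morph) evalE eval_XYC.
Qed.

(** * A system solvable modulo every N but not over Z *)

Lemma local_solution N : (0 < N)%N ->
  {pq : int * int | 3 * pq.1 - 2 * pq.2 + 1 = 0 & (N%:Z %| pq.1 * pq.2)%Z}.
Proof.
move=> N_gt0; have [m coprime_2m ->] := pfactor_coprime (isT : prime 2) N_gt0.
set a := logn 2 N; have [u [v bezout]] := Bezoutz (3 * m)%N (2 ^ a.+1)%N.
have coprime_3m_2 : gcdz (3 * m)%N (2 ^ a.+1)%N = 1.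
  apply/eqP; rewrite /gcdz !absz_nat; change (coprime (3 * m) (2 ^ a.+1)).
  by rewrite coprimeMl !coprime_pexpr // !coprimen2 /= -coprime2n.
exists (- (u * m%:Z), v * (2 ^ a)%N%:Z) => /=.
  transitivity (1 - (u * (3 * m)%N%:Z + v * (2 ^ a.+1)%N%:Z)).
    by rewrite !PoszM expnS PoszM; ring.
  by rewrite bezout coprime_3m_2 subrr.
by apply/dvdzP; exists (- (u * v)); rewrite PoszM; ring.
Qed.

Lemma no_int_solution (p q : int) : p * q = 0 -> 3 * p - 2 * q + 1 != 0.
Proof. by move/eqP; rewrite mulf_eq0 => /orP[] /eqP->; lia. Qed.

Definition comm_const_word (i : nat) (t : heis int) : seq (UT3 + letter) :=
  [:: inr (i, false); inl (UT3_of_heis t); inr (i, true); inl (UT3_of_heis (heis_inv t))].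

Definition comm_var_word (i j : nat) : seq (UT3 + letter) :=
  [:: inr (i, false); inr (j, false); inr (i, true); inr (j, true)].

Definition main_relation : seq (UT3 + letter) :=
  comm_const_word 0 (0, 1, 0) ++ comm_const_word 0 (0, 1, 0) ++ comm_const_word 0 (0, 1, 0)
  ++ comm_const_word 1 (1, 0, 0) ++ comm_const_word 1 (1, 0, 0)
  ++ [:: inl (UT3_of_heis (0, 0, 1))].

Definition system : seq (seq (UT3 + letter)) :=
  [:: comm_const_word 0 (1, 0, 0); comm_const_word 1 (0, 1, 0); comm_var_word 0 1;
      main_relation].

Section SystemEval.
Variables (R : comPzRingType) (rho : {rmorphism int -> R}) (s : nat -> heis R).
Let c := heis_map rho \o heis_of_UT3.

Lemma eval_comm_const_word i t : eval_cword c s (comm_const_word i t) =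
  (0, 0, (s i).1.1 * rho t.1.2 - rho t.1.1 * (s i).1.2).
Proof.
have [_ invM _] := heis_map_morph rho.
by rewrite /= /c /= !UT3_of_heisK invM; apply: heis_commE.
Qed.

Lemma eval_system :
  (forall w, List.In w system -> eval_cword c s w = gone (heis R)) <->
  [/\ (s 0%N).1.2 = 0, (s 1%N).1.1 = 0, (s 0%N).1.1 * (s 1%N).1.2 = 0
    & 3 * (s 0%N).1.1 - 2 * (s 1%N).1.2 + 1 = 0].
Proof.
have eval1 : eval_cword c s (comm_const_word 0 (1, 0, 0)) = (0, 0, - (s 0%N).1.2).
  by rewrite eval_comm_const_word /= rmorph0 rmorph1; congr (_, _, _); ring.
have eval2 : eval_cword c s (comm_const_word 1 (0, 1, 0)) = (0, 0, (s 1%N).1.1).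
  by rewrite eval_comm_const_word /= rmorph0 rmorph1; congr (_, _, _); ring.
have eval3 : eval_cword c s (comm_var_word 0 1) =
    (0, 0, (s 0%N).1.1 * (s 1%N).1.2 - (s 1%N).1.1 * (s 0%N).1.2) by apply: heis_commE.
have eval4 : eval_cword c s main_relation =
    (0, 0, 3 * (s 0%N).1.1 - 2 * (s 1%N).1.2 + 1).
  rewrite !eval_cword_cat !eval_comm_const_word /= /c /= UT3_of_heisK /= !rmorph0 !rmorph1.
  by rewrite /heis_map /heis_mul /=; congr (_, _, _); ring.
split=> [sys|[p2 q1 pq rel] w].
  have /(congr1 snd) := sys _ (or_introl erefl).
  have /(congr1 snd) := sys _ (or_intror (or_introl erefl)).
  have /(congr1 snd) := sys _ (or_intror (or_intror (or_introl erefl))).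
  have /(congr1 snd) := sys _ (or_intror (or_intror (or_intror (or_introl erefl)))).
  rewrite eval1 eval2 eval3 eval4 /= => rel + q1 /eqP.
  by rewrite q1 mul0r subr0 oppr_eq0 => pq /eqP p2.
case=> [<-|[<-|[<-|[<-|[]]]]]; rewrite ?eval1 ?eval2 ?eval3 ?eval4 ?p2 ?q1 ?rel //=.
  by rewrite oppr0.
by rewrite mul0r subr0 pq.
Qed.
End SystemEval.

Lemma system_solvable_mod :
  exists s : nat -> heis_mod, forall w, List.In w system -> eval_cword embed s w = gone heis_mod.
Proof.
pose pq k := s2val (local_solution (ltn0Sn k.+1)).
exists (fun i k => if i == 0%N then (intr (pq k).1, 0, 0) else (0, intr (pq k).2, 0)).
move=> w w_sys; apply: functional_extensionality_dep => k.
rewrite (eval_cword_morph (proj_morph _ k)); move: w w_sys; apply/(eval_system intr) => /=.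
have rel := s2valP (local_solution (ltn0Sn k.+1)).
have dvd_pq := s2valP' (local_solution (ltn0Sn k.+1)).
rewrite -/(pq k) in rel dvd_pq *; case: (pq k) rel dvd_pq => p q /= rel dvd_pq.
split=> //; first by rewrite -rmorphM; apply/eqP; rewrite -(rmorph0 intr) intr_Zp_eq subr0.
rewrite !pmulrn -!rmorphM -rmorphB -(rmorph1 (intr : int -> 'Z_(k.+2))) -rmorphD.
by rewrite rel rmorph0.
Qed.

Lemma system_unsolvable_UT3 (T : nat -> heis int) :
  ~ (forall w, List.In w system -> eval_cword heis_of_UT3 T w = gone (heis int)).
Proof.
have -> : heis_of_UT3 = heis_map idfun \o heis_of_UT3.
  by apply: functional_extensionality => A /=; case: (heis_of_UT3 A) => [[? ?] ?].
by move/eval_system => [_ _ /no_int_solution/eqP].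
Qed.

Lemma embed_not_algebraically_closed : ~ algebraically_closed embed.
Proof.
move=> /(_ system system_solvable_mod)[t sol_t]; have [_ _ diag_mod1] := diag_mod_morph.
apply: (@system_unsolvable_UT3 (heis_of_UT3 \o t)) => w /sol_t; rewrite -diag_mod1.
by rewrite -(eval_cword_morph diag_mod_morph); apply: diag_mod_inj.
Qed.

Theorem mainTheorem2 : ~ strongly_verbally_closed UT3_mul.
Proof.
move=> svc; apply: embed_not_algebraically_closed.
exact: svc _ _ embed_is_embedding embed_verbally_closed.
Qed.
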